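(* Let $k$ have characteristic zero, $V$ have basis $x_1,\dots,x_n$ ($n\ge1$), $N\geq2$, $w$ a non-zero homogeneous potential of degree $N+1$, $A=A(w)$, $r_i=\partial_{x_i}(w)$, $R=\mathrm{span}\{r_i\}$. Fix $J\subset\{1,\dots,n\}$ with $(r_j)_{j\in J}$ a basis of $R$, dual basis $(r_j^* )_{j\in J}$ of $R^*$, and let $(x_i^* )$ be the dual basis of $V^*$. Consider the complex $C_w$: $$0\to A\otimes kc(w)\otimes A\xrightarrow{d_3}A\otimes R\otimes A\xrightarrow{d_2}A\otimes V\otimes A\xrightarrow{d_1}A\otimes A\to0$$ with $d_1(1\otimes v\otimes1)=v\otimes1-1\otimes v$, $d_2(1\otimes v_1\cdots v_N\otimes1)=\sum_{i}v_1\cdots v_{i-1}\otimes v_i\otimes v_{i+1}\cdots v_N$, $d_3(1\otimes c(w)\otimes1)=\sum_{i=1}^n x_i\otimes r_i\otimes1-1\otimes r_i\otimes x_i$; and the complex $C_w^\vee$: $$0\to A\otimes k1^*\otimes A\xrightarrow{d_1^*}A\otimes V^*\otimes A\xrightarrow{d_2^*}A\otimes R^*\otimes A\xrightarrow{d_3^*}A\otimes kc(w)^*\otimes A\to0$$ with $d_1^*(1^* )=\sum_i x_i\otimes x_i^*\otimes1-1\otimes x_i^*\otimes x_i$, $d_2^*(x_i^* )=\sum_{j\in J}\sum\big(\tfrac{\partial r_j}{\partial x_i}\big)_2\otimes r_j^*\otimes\big(\tfrac{\partial r_j}{\partial x_i}\big)_1$, and $d_3^*(r_i^* )=x_i\otimes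 c(w)^*\otimes1-1\otimes c(w)^*\otimes x_i+\sum_{j\notin J}r_i^*(r_j)\,(x_j\otimes c(w)^*\otimes1-1\otimes c(w)^*\otimes x_j)$ for $i\in J$. Define $A$-bimodule maps $f_0(1\otimes1)=c(w)^*$, $f_1(x_i)=r_i^*$ if $i\in J$ and $0$ if $i\notin J$, $f_2(r_i)=x_i^*$ ($i\in J$), $f_3(c(w))=1^*$, forming a diagram $f_3:A c(w)A\to A1^*A$, $f_2:ARA\to AV^*A$, $f_1:AVA\to AR^*A$, $f_0:AA\to Ac(w)^*A$. Then: (i) $f_1\circ d_2=d_2^*\circ f_2$; (ii) $f_2\circ d_3=d_1^*\circ f_3$ holds if and only if $\dim R=n$, and $f_0\circ d_1=d_3^*\circ f_1$ holds if and only if $\dim R=n$; (iii) if $C_w^\vee$ is exact at $A\otimes V^*\otimes A$ (equivalently $\mathrm{H}^1(A,A\otimes A)=0$ with outer bimodule structure), then $\dim R=n$.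
   Context: All tensor products are over $k$; elements $a\otimes v\otimes b$ of $A\otimes V\otimes A$ etc.; bimodule maps are determined by their values on $1\otimes(\cdot)\otimes 1$, written without the outer $1$'s. Cyclic derivative $\partial_x(p)=\sum_{p=uxv}vu$ and cyclic sum $c(a_1\cdots a_r)=\sum_i a_i\cdots a_ra_1\cdots a_{i-1}$ on monomials. The ordinary partial derivative $\frac{\partial}{\partial x}:T(V)\to T(V)\otimes T(V)$ is $\frac{\partial p}{\partial x}=\sum_{p=uxv}u\otimes v$ on monomials, written symbolically $\sum\big(\frac{\partial p}{\partial x}\big)_1\otimes\big(\frac{\partial p}{\partial x}\big)_2$ (images taken in $A\otimes A$). $A(w)=T(V)/(\partial_{x_1}w,\dots,\partial_{x_n}w)$. The complex $C_w^\vee$ is the image of $\mathrm{Hom}_{A\text{-}A}(C_w,A\otimes A)$ (outer bimodule structure on $A\otimes A$, resulting bimodule structure from the inner one, with Koszul sign convention) under the natural isomorphisms $\mathrm{Hom}_{A\text{-}A}(A\otimes F\otimes A,A\otimes A)\cong A\otimes F^*\otimes A$. *)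

From HB Require Import structures.
From mathcomp Require Import all_boot all_order all_algebra.
Set Implicit Arguments. Unset Strict Implicit. Unset Printing Implicit Defensive.
Import Order.TTheory GRing.Theory Num.Theory.
Local Open Scope ring_scope.

Section Defs.
Variables (k : fieldType) (n : nat).

(* words in x_1..x_n = monomials of T(V) *)
Definition word := seq 'I_n.

(* elements of T(V) as formal finite linear combinations of words *)
Definition nc := seq (k * word).

Definition ncoef (p : nc) (u : word) : k := \sum_(t <- p | t.2 == u) t.1.
Definition nceq (p q : nc) : Prop := forall u, ncoef p u = ncoef q u.
Definition ncw (u : word) : nc := [:: (1, u)].
Definition ncone : nc := ncw [::].
Definition ncX (i : 'I_n) : nc := ncw [:: i].
Definition ncmul (p q : nc) : nc := [seq (a.1 * b.1, a.2 ++ b.2) | a <- p, b <- q].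
Definition ncscale (c : k) (p : nc) : nc := [seq (c * a.1, a.2) | a <- p].

Definition homog (p : nc) (d : nat) : Prop :=
  forall u, size u != d -> ncoef p u = 0.

(* cyclic derivative: d_x(u x v) = v u *)
Definition cdiff (i : 'I_n) (p : nc) : nc :=
  flatten [seq [seq (a.1, drop j.+1 a.2 ++ take j a.2)
               | j <- iota 0 (size a.2) & nth i a.2 j == i] | a <- p].

(* ordinary partial derivative d p / d x_i = sum_{p = u x v} u (x) v *)
Definition pdiff (i : 'I_n) (p : nc) : seq (k * (word * word)) :=
  flatten [seq [seq (a.1, (take j a.2, drop j.+1 a.2))
               | j <- iota 0 (size a.2) & nth i a.2 j == i] | a <- p].

(* elements of T(V) (x) F (x) T(V), F having basis indexed by B *)
Definition tns (B : Type) := seq (k * (word * B * word)).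

Definition tcoef (B : eqType) (t : tns B) (x : word * B * word) : k :=
  \sum_(s <- t | s.2 == x) s.1.
Definition teq (B : eqType) (t1 t2 : tns B) : Prop :=
  forall x, tcoef t1 x = tcoef t2 x.
Definition tscale (B : Type) (c : k) (t : tns B) : tns B :=
  [seq (c * s.1, s.2) | s <- t].
Definition tlmul (B : Type) (u : word) (t : tns B) : tns B :=
  [seq (s.1, (u ++ s.2.1.1, s.2.1.2, s.2.2)) | s <- t].
Definition trmul (B : Type) (t : tns B) (v : word) : tns B :=
  [seq (s.1, (s.2.1.1, s.2.1.2, s.2.2 ++ v)) | s <- t].
Definition tsimp (B : Type) (p : nc) (b : B) (q : nc) : tns B :=
  [seq (a.1 * c.1, (a.2, b, c.2)) | a <- p, c <- q].

(* the bimodule map determined by its values phi b on the generators 1(x)b(x)1 *)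
Definition ext (B B' : Type) (phi : B -> tns B') (t : tns B) : tns B' :=
  flatten [seq tscale s.1 (tlmul s.2.1.1 (trmul (phi s.2.1.2) s.2.2)) | s <- t].

Variable w : nc.

Definition rel (i : 'I_n) : nc := cdiff i w.

(* generators of the kernel of T(V)(x)F(x)T(V) -> A(x)F(x)A,
   i.e. of I(x)F(x)T + T(x)F(x)I with I = (r_1,...,r_n) *)
Definition genK (B : Type) (g : k * 'I_n * word * word * B * word * bool) : tns B :=
  let: (c, i, u, v, b, z, s) := g in
  let m := ncmul (ncmul (ncw u) (rel i)) (ncw v) in
  tscale c (if s then tsimp m b (ncw z) else tsimp (ncw z) b m).

(* t represents 0 in A(w) (x) F (x) A(w) *)
Definition zeroA (B : eqType) (t : tns B) : Prop :=
  exists L : seq (k * 'I_n * word * word * B * word * bool),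
    teq t (flatten [seq genK g | g <- L]).

Definition eqA (B : eqType) (t1 t2 : tns B) : Prop :=
  zeroA (t1 ++ tscale (-1) t2).

Variable J : {set 'I_n}.
(* index type of the basis (r_j)_{j in J} of R (and of the dual basis of R^* ) *)
Definition Jt := {j : 'I_n | j \in J}.

Definition rspan (coord : 'I_n -> Jt -> k) : Prop :=
  forall i, nceq (rel i) (flatten [seq ncscale (coord i l) (rel (val l)) | l : Jt]).
Definition rindep : Prop :=
  forall lam : Jt -> k,
    nceq (flatten [seq ncscale (lam l) (rel (val l)) | l : Jt]) [::] ->
    forall l, lam l = 0.

Variable coord : 'I_n -> Jt -> k.

Definition comm (B : Type) (i : 'I_n) (b : B) : tns B :=
  tsimp (ncX i) b ncone ++ tscale (-1) (tsimp ncone b (ncX i)).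

(* complex C_w ; generators: A(x)A ~ unit, V ~ 'I_n, R ~ Jt, kc(w) ~ unit *)
Definition d1 (i : 'I_n) : tns unit := comm i tt.
Definition d2 (l : Jt) : tns 'I_n :=
  flatten [seq [seq (a.1, (a.2.1, i, a.2.2)) | a <- pdiff i (rel (val l))] | i : 'I_n].
Definition d3 (_ : unit) : tns Jt :=
  flatten [seq flatten [seq tscale (coord i l) (comm i l) | l : Jt] | i : 'I_n].

(* complex C_w^vee ; generators: 1^* ~ unit, V^* ~ 'I_n, R^* ~ Jt, c(w)^* ~ unit *)
Definition d1s (_ : unit) : tns 'I_n := flatten [seq comm i i | i : 'I_n].
Definition d2s (i : 'I_n) : tns Jt :=
  flatten [seq [seq (a.1, (a.2.2, l, a.2.1)) | a <- pdiff i (rel (val l))] | l : Jt].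
(* r_i^*(r_j) = coord j i *)
Definition d3s (l : Jt) : tns unit :=
  comm (val l) tt ++
  flatten [seq tscale (coord j l) (comm j tt) | j <- enum 'I_n & j \notin J].

Definition f0 (_ : unit) : tns unit := tsimp ncone tt ncone.
Definition f1 (i : 'I_n) : tns Jt :=
  match insub i : option Jt with Some l => tsimp ncone l ncone | None => [::] end.
Definition f2 (l : Jt) : tns 'I_n := tsimp ncone (val l) ncone.
Definition f3 (_ : unit) : tns unit := tsimp ncone tt ncone.

End Defs.

From Pilot Require Import Defs.
From HB Require Import structures.
From mathcomp Require Import all_boot all_order all_algebra.
From mathcomp Require Import zify.
Set Implicit Arguments. Unset Strict Implicit. Unset Printing Implicit Defensive.
Import Order.TTheory GRing.Theory Num.Theory.
Local Open Scope ring_scope.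

(* Since the relations
   r_i are homogeneous of degree N >= 2, every functional vanishing on the basis
   tensors u (x) b (x) v with |u| >= 2 or |v| >= 2 kills the kernel of
   T (x) F (x) T -> A (x) F (x) A; hence the coefficients of such "short" basis
   tensors are well defined on A (x) F (x) A (lemma eqA_coef).

   (i) is the symmetry of second derivatives of a potential (pdiff_rel_sym),
   proved word by word via an explicit involution on pairs of cut positions.
   (ii) and (iii): when J is everything the coordinates of the r_i are the
   Kronecker delta and both squares commute formally; when some index j lies
   outside J, comparing one short coefficient (of x_j (x) x_j^* (x) 1, of
   x_j (x) c(w)^* (x) 1, resp. of 1 (x) x_j^* (x) 1 in an explicit d_2^*-cycle)
   yields a contradiction. *)

Section Pairing.
Variable R : comPzRingType.

Definition feval (X : Type) (g : X -> R) (s : seq (R * X)) : R :=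
  \sum_(a <- s) a.1 * g a.2.

Definition fcoef (X : eqType) (s : seq (R * X)) (x : X) : R :=
  \sum_(a <- s | a.2 == x) a.1.

Lemma feval_nil (X : Type) (g : X -> R) : feval g [::] = 0.
Proof. by rewrite /feval big_nil. Qed.

Lemma feval_cat (X : Type) (g : X -> R) s1 s2 :
  feval g (s1 ++ s2) = feval g s1 + feval g s2.
Proof. by rewrite /feval big_cat. Qed.

Lemma feval_flatten (X : Type) (g : X -> R) (ss : seq (seq (R * X))) :
  feval g (flatten ss) = \sum_(s <- ss) feval g s.
Proof. by rewrite /feval big_flatten. Qed.

Lemma feval_image (X : Type) (I : finType) (g : X -> R) (F : I -> seq (R * X)) :
  feval g (flatten [seq F i | i : I]) = \sum_(i : I) feval g (F i).
Proof. by rewrite feval_flatten big_image. Qed.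

Lemma feval_map (X Y : Type) (g : X -> R) (f : Y -> R * X) (s : seq Y) :
  feval g (map f s) = \sum_(y <- s) (f y).1 * g (f y).2.
Proof. by rewrite /feval big_map. Qed.

Lemma eq_feval (X : Type) (g1 g2 : X -> R) s :
  g1 =1 g2 -> feval g1 s = feval g2 s.
Proof. by move=> eq_g; apply: eq_bigr => a _; rewrite eq_g. Qed.

Lemma feval0 (X : Type) (s : seq (R * X)) : feval (fun _ => 0) s = 0.
Proof. by rewrite /feval big1 // => a _; rewrite mulr0. Qed.

Lemma fcoefE (X : eqType) (s : seq (R * X)) x :
  fcoef s x = feval (fun y => (y == x)%:R) s.
Proof.
rewrite /fcoef /feval big_mkcond; apply: eq_bigr => a _.
by case: eqP; rewrite ?mulr1 ?mulr0.
Qed.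

Lemma feval_fcoef_seq (X : eqType) (g : X -> R) (s : seq (R * X)) (r : seq X) :
  uniq r -> {subset map snd s <= r} ->
  feval g s = \sum_(x <- r) g x * fcoef s x.
Proof.
move=> r_uniq s_r; under eq_bigr do rewrite fcoefE /feval mulr_sumr.
rewrite exchange_big; apply: eq_big_seq => a a_s.
rewrite (bigD1_seq a.2) ?eqxx //=; last exact/s_r/map_f.
rewrite big1 => [|x]; last by rewrite eq_sym => /negPf ->; rewrite !mulr0.
by rewrite addr0 mulr1 mulrC.
Qed.

Lemma feval_fcoef (X : eqType) (g : X -> R) (s1 s2 : seq (R * X)) :
  fcoef s1 =1 fcoef s2 -> feval g s1 = feval g s2.
Proof.
move=> eq_coef; set r := undup (map snd (s1 ++ s2)).
rewrite !(@feval_fcoef_seq _ g _ r) ?undup_uniq //.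
- by apply: eq_bigr => x _; rewrite eq_coef.
- by move=> x x_s2; rewrite mem_undup map_cat mem_cat x_s2 orbT.
- by move=> x x_s1; rewrite mem_undup map_cat mem_cat x_s1.
Qed.

End Pairing.

Section FormalTensors.
Variables (k : fieldType) (n : nat).

Local Notation btensor B := (word n * B * word n)%type.

Lemma feval_ncscale (h : word n -> k) c (p : nc k n) :
  feval h (ncscale c p) = c * feval h p.
Proof. by rewrite feval_map mulr_sumr; apply: eq_bigr => a _ /=; rewrite mulrA. Qed.

Lemma feval_ncmul (h : word n -> k) (p q : nc k n) :
  feval h (ncmul p q) = \sum_(a <- p) \sum_(b <- q) a.1 * b.1 * h (a.2 ++ b.2).
Proof. by rewrite feval_flatten big_map; apply: eq_bigr => a _; rewrite feval_map. Qed.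

Lemma feval_sandwich (h : word n -> k) u (r : nc k n) v :
  feval h (ncmul (ncmul (ncw k u) r) (ncw k v)) = feval (fun y => h (u ++ y ++ v)) r.
Proof.
rewrite feval_ncmul; under eq_bigr do rewrite big_seq1 /= mulr1.
rewrite -/(feval (fun x => h (x ++ v)) _) feval_ncmul big_seq1.
by apply: eq_bigr => b _ /=; rewrite mul1r catA.
Qed.

Lemma feval_cdiff (h : word n -> k) i (p : nc k n) :
  feval h (cdiff i p) = feval (fun y => \sum_(j <- iota 0 (size y) | nth i y j == i)
                                         h (drop j.+1 y ++ take j y)) p.
Proof.
rewrite feval_flatten big_map; apply: eq_bigr => a _.
by rewrite feval_map big_filter mulr_sumr.
Qed.

Lemma feval_pdiff (h : word n * word n -> k) i (p : nc k n) :
  feval h (pdiff i p) = feval (fun y => \sum_(j <- iota 0 (size y) | nth i y j == i)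
                                         h (take j y, drop j.+1 y)) p.
Proof.
rewrite feval_flatten big_map; apply: eq_bigr => a _.
by rewrite feval_map big_filter mulr_sumr.
Qed.

Lemma nceq_feval (p q : nc k n) h : nceq p q -> feval h p = feval h q.
Proof. exact: feval_fcoef. Qed.

Lemma feval_tscale (B : Type) (g : btensor B -> k) c (t : tns k n B) :
  feval g (tscale c t) = c * feval g t.
Proof. by rewrite feval_map mulr_sumr; apply: eq_bigr => s _ /=; rewrite mulrA. Qed.

Lemma feval_tsimp (B : Type) (g : btensor B -> k) p b q :
  feval g (@tsimp k n B p b q) = \sum_(a <- p) \sum_(c <- q) a.1 * c.1 * g (a.2, b, c.2).
Proof. by rewrite feval_flatten big_map; apply: eq_bigr => a _; rewrite feval_map. Qed.

Lemma feval_unit (B : Type) (g : btensor B -> k) b :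
  feval g (@tsimp k n B (ncone k n) b (ncone k n)) = g ([::], b, [::]).
Proof. by rewrite feval_tsimp !big_seq1 /= !mul1r. Qed.

Lemma feval_comm (B : Type) (g : btensor B -> k) i b :
  feval g (@comm k n B i b) = g ([:: i], b, [::]) - g ([::], b, [:: i]).
Proof. by rewrite feval_cat feval_tscale !feval_tsimp !big_seq1 /= !mul1r mulN1r. Qed.

Lemma feval_ext (B B' : Type) (g : btensor B' -> k) (phi : B -> tns k n B') (t : tns k n B) :
  feval g (ext phi t) =
  feval (fun s => feval (fun s' => g (s.1.1 ++ s'.1.1, s'.1.2, s'.2 ++ s.2)) (phi s.1.2)) t.
Proof.
rewrite feval_flatten big_map; apply: eq_bigr => s _.
by rewrite feval_tscale /tlmul /trmul -map_comp feval_map.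
Qed.

Lemma eq_feval_ext (B B' : Type) (g : btensor B' -> k) (phi psi : B -> tns k n B') t :
  (forall b g', feval g' (phi b) = feval g' (psi b)) ->
  feval g (ext phi t) = feval g (ext psi t).
Proof. by move=> eq_phi; rewrite !feval_ext; apply: eq_feval => s; rewrite eq_phi. Qed.

Lemma feval_ext_ext (B1 B2 B3 : Type) (g : btensor B3 -> k)
    (phi : B2 -> tns k n B3) (psi : B1 -> tns k n B2) (t : tns k n B1) :
  feval g (ext phi (ext psi t)) = feval g (ext (fun b => ext phi (psi b)) t).
Proof.
rewrite !feval_ext; apply: eq_feval => s; rewrite feval_ext; apply: eq_feval => s'.
by apply: eq_feval => s'' /=; rewrite !catA.
Qed.

Lemma feval_ext_unit (B B' : Type) (g : btensor B' -> k) (phi : B -> tns k n B') b :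
  feval g (ext phi (tsimp (ncone k n) b (ncone k n))) = feval g (phi b).
Proof. by rewrite feval_ext feval_unit; apply: eq_feval => -[[x b'] y]; rewrite cats0. Qed.

Lemma tcoefE (B : eqType) (t : tns k n B) x : tcoef t x = feval (fun y => (y == x)%:R) t.
Proof. exact: fcoefE. Qed.

Lemma teq_feval (B : eqType) (t1 t2 : tns k n B) :
  teq t1 t2 <-> forall g, feval g t1 = feval g t2.
Proof.
split=> [eq_t g|eq_g x]; first exact: feval_fcoef.
by rewrite !tcoefE eq_g.
Qed.

Lemma eqA_feval (w : nc k n) (B : eqType) (t1 t2 : tns k n B) :
  (forall g, feval g t1 = feval g t2) -> eqA w t1 t2.
Proof.
move=> eq_g; exists [::]; apply/teq_feval => g /=.
by rewrite feval_cat feval_tscale eq_g feval_nil mulN1r subrr.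
Qed.

Lemma feval_homog (p : nc k n) d (G : word n -> k) :
  homog p d -> (forall y, size y = d -> G y = 0) -> feval G p = 0.
Proof.
move=> p_homog G_d; rewrite (@feval_fcoef_seq _ _ G p (undup (map snd p))) ?undup_uniq //.
  rewrite big1 // => y _; case: (eqVneq (size y) d) => [/G_d -> | /p_homog p_y].
    by rewrite mul0r.
  by rewrite -[fcoef _ _]/(ncoef _ _) p_y mulr0.
by move=> x; rewrite mem_undup.
Qed.

End FormalTensors.

Section ShortTensors.
Variables (k : fieldType) (n : nat) (w : nc k n) (N : nat).
Hypotheses (w_homog : homog w N.+1) (N_ge2 : (2 <= N)%N).

Lemma feval_rel_homog i (h : word n -> k) :
  (forall y, size y = N -> h y = 0) -> feval h (Defs.rel w i) = 0.
Proof.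
move=> h_N; rewrite /Defs.rel feval_cdiff; apply: (feval_homog w_homog) => y y_size.
rewrite big_seq_cond big1 // => j /andP [j_y _]; apply: h_N.
move: j_y; rewrite mem_iota add0n => /andP[_ j_y].
rewrite size_cat size_drop size_take j_y; lia.
Qed.

Definition short (B : Type) (g : word n * B * word n -> k) : Prop :=
  forall x b y, (2 <= size x)%N || (2 <= size y)%N -> g (x, b, y) = 0.

(* Since N >= 2, short functionals kill the kernel of T(x)F(x)T -> A(x)F(x)A. *)
Lemma feval_genK_short (B : Type) (g : word n * B * word n -> k) gen :
  short g -> feval g (genK w gen) = 0.
Proof.
move=> g_short; case: gen => [[[[[[c i] u] v] b] z] []] /=;
  rewrite feval_tscale feval_tsimp; apply/eqP; rewrite mulf_eq0; apply/orP; right.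
- under eq_bigr do rewrite big_seq1 /= mulr1.
  rewrite -/(feval (fun x => g (x, b, z)) _) feval_sandwich.
  rewrite (feval_rel_homog _ _) // => y y_size.
  by apply: g_short; rewrite !size_cat y_size; apply/orP; left; lia.
- rewrite big_seq1 /=.
  under eq_bigr do rewrite mul1r.
  rewrite -/(feval (fun x => g (z, b, x)) _) feval_sandwich.
  rewrite (feval_rel_homog _ _) // => y y_size.
  by apply: g_short; rewrite !size_cat y_size; apply/orP; right; lia.
Qed.

Lemma zeroA_short (B : eqType) (t : tns k n B) (g : word n * B * word n -> k) :
  zeroA w t -> short g -> feval g t = 0.
Proof.
move=> [L /teq_feval ->] g_short; rewrite feval_flatten big_map big1 // => gen _.
exact: feval_genK_short.
Qed.

Lemma eqA_coef (B : eqType) (t1 t2 : tns k n B) x b y :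
  eqA w t1 t2 -> (size x < 2)%N -> (size y < 2)%N ->
  tcoef t1 (x, b, y) = tcoef t2 (x, b, y).
Proof.
move=> t12 x_short y_short; apply/eqP; rewrite -subr_eq0; apply/eqP.
rewrite !tcoefE -mulN1r.
rewrite -feval_tscale -feval_cat; apply: zeroA_short t12 _ => x' b' y' long.
case: eqP => [[ex _ ey] | //]; move: long; rewrite ex ey.
by rewrite leqNgt x_short leqNgt y_short.
Qed.

End ShortTensors.

(* The word obtained from y by deleting its letter at position p and rotating so
   that the letters after p come first: the cyclic-derivative term of that letter. *)
Definition cut_rot (T : Type) (y : seq T) (p : nat) : seq T := drop p.+1 y ++ take p y.

Lemma rot_cut (T : Type) (x0 : T) (y : seq T) p :
  (p < size y)%N -> rot p y = nth x0 y p :: cut_rot y p.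
Proof. by move=> p_y; rewrite /rot (drop_nth x0 p_y). Qed.

Lemma size_cut_rot (T : Type) (y : seq T) p :
  (p < size y)%N -> size (cut_rot y p) = (size y).-1.
Proof. by move=> p_y; rewrite size_cat size_drop size_take p_y; lia. Qed.

Lemma rot_cut_cut (T : Type) (x0 : T) (y : seq T) m p q :
  size y = m.+1 -> (p < m.+1)%N -> (q < m)%N ->
  rot ((p + q + 1) %% m.+1) y =
  nth x0 (cut_rot y p) q :: (drop q.+1 (cut_rot y p) ++ nth x0 y p :: take q (cut_rot y p)).
Proof.
move=> y_size p_m q_m.
have cut_size : size (cut_rot y p) = m by rewrite size_cut_rot y_size.
have -> : rot ((p + q + 1) %% m.+1) y = rot q.+1 (rot p y).
  rewrite rot_add_mod y_size; try lia.
  case: ifP => pq_m.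
    case: (ltnP (q.+1 + p) m.+1) => pq_m'; first by rewrite modn_small; [congr rot; lia | lia].
    have -> : (q.+1 + p = m.+1)%N by lia.
    have -> : (p + q + 1 = m.+1)%N by lia.
    by rewrite modnn rot0 -y_size rot_size.
  have -> : (p + q + 1 = (q.+1 + p - m.+1) + m.+1)%N by lia.
  by rewrite modnDr modn_small //; lia.
by rewrite [rot p y](rot_cut x0) ?y_size // /rot /= (drop_nth x0) ?cut_size.
Qed.

Lemma swap_pos_subproof m (q : 'I_m) : (m - q.+1 < m)%N.
Proof. by case: q => q /=; lia. Qed.

(* The involution on pairs of cut positions exchanging the roles of the two
   deleted letters. *)
Definition swap_pos m (pq : 'I_m.+1 * 'I_m) : 'I_m.+1 * 'I_m :=
  (Ordinal (ltn_pmod (pq.1 + pq.2 + 1)%N (ltn0Sn m)), Ordinal (swap_pos_subproof pq.2)).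

Lemma swap_posK m : involutive (@swap_pos m).
Proof.
case=> p [q q_m]; rewrite /swap_pos /=; congr pair; apply: val_inj => /=; last by lia.
rewrite -(addnA ((p + q + 1) %% m.+1)%N) modnDml.
have -> : (p + q + 1 + (m - q.+1 + 1) = p + m.+1)%N by lia.
by rewrite modnDr modn_small.
Qed.

Section SecondDerivative.
Variables (k : fieldType) (n : nat).

(* The pairing of (d/dx_i)(d_{x_j} y) with h, for a single word y: delete an x_j
   cyclically, then split the result at an x_i. *)
Definition dd_pair (i j : 'I_n) (h : word n -> word n -> k) (y : word n) : k :=
  \sum_(p <- iota 0 (size y) | nth j y p == j)
    \sum_(q <- iota 0 (size (cut_rot y p)) | nth i (cut_rot y p) q == i)
       h (take q (cut_rot y p)) (drop q.+1 (cut_rot y p)).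

Lemma sum_iota (P : pred nat) (F : nat -> k) m :
  \sum_(p <- iota 0 m | P p) F p = \sum_(p < m) (if P p then F p else 0).
Proof. by rewrite big_mkcond -{1}(subn0 m) -/(index_iota 0 m) big_mkord. Qed.

Lemma dd_pair_ord i j h y m (d : 'I_n) :
  size y = m.+1 ->
  dd_pair i j h y = \sum_(p < m.+1) \sum_(q < m)
     (if (nth d y p == j) && (nth d (cut_rot y p) q == i)
      then h (take q (cut_rot y p)) (drop q.+1 (cut_rot y p)) else 0).
Proof.
move=> y_size; rewrite /dd_pair sum_iota y_size; apply: eq_bigr => p _.
have p_y : (p < size y)%N by rewrite y_size.
rewrite (set_nth_default d j p_y); case: eqP => _ /=; last by rewrite big1.
rewrite sum_iota size_cut_rot // y_size /=; apply: eq_bigr => q _.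
by rewrite (set_nth_default d i) // size_cut_rot // y_size.
Qed.

Lemma dd_pair_sym i j h y : dd_pair i j h y = dd_pair j i (fun u v => h v u) y.
Proof.
case y_size: (size y) => [|m]; first by rewrite /dd_pair y_size !big_nil.
rewrite !(dd_pair_ord _ _ _ i y_size) !pair_big /=.
rewrite (reindex_inj (inv_inj (@swap_posK m))) /=; apply: eq_bigr => -[p q] _ /=.
have [p_m q_m] := (ltn_ord p, ltn_ord q).
have p'_y : ((p + q + 1) %% m.+1 < size y)%N by rewrite y_size ltn_pmod.
have := rot_cut_cut i y_size p_m q_m; rewrite (rot_cut i p'_y) => -[-> ->] /=.
have cut_size : size (cut_rot y p) = m by rewrite size_cut_rot // y_size.
have drop_size : size (drop q.+1 (cut_rot y p)) = (m - q.+1)%N by rewrite size_drop cut_size.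
rewrite nth_cat drop_size ltnn subnn /= take_size_cat // drop_cat drop_size.
have -> : ((m - q.+1).+1 < m - q.+1)%N = false by lia.
by rewrite subSnn /= drop0 andbC.
Qed.

Lemma pdiff_rel_sym (w : nc k n) i j (h : word n -> word n -> k) :
  feval (fun x => h x.1 x.2) (pdiff i (Defs.rel w j)) =
  feval (fun x => h x.2 x.1) (pdiff j (Defs.rel w i)).
Proof.
rewrite !feval_pdiff /Defs.rel !feval_cdiff.
exact: eq_feval (dd_pair_sym i j h).
Qed.

End SecondDerivative.

Lemma in_full_set n (J : {set 'I_n}) : #|J| = n -> forall i, i \in J.
Proof.
move=> J_card i; have J_full : J = setT.
  by apply/eqP; rewrite eqEcard subsetT cardsT card_ord J_card /=.
by rewrite J_full inE.
Qed.

Lemma exists_notin n (J : {set 'I_n}) : #|J| <> n -> exists j, j \notin J.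
Proof.
move=> J_card; case: (pickP [pred j | j \notin J]) => [j /= j_J | J_full]; first by exists j.
case: J_card; rewrite -[RHS]card_ord; apply: eq_card => j.
by rewrite (negbFE (J_full j)).
Qed.

Section Proposition2p4.
Variables (k : fieldType) (n : nat) (w : nc k n) (J : {set 'I_n}) (coord : 'I_n -> Jt J -> k).

Local Notation unit_tensor B b := (tsimp (ncone k n) b (ncone k n) : tns k n B).

Lemma sum_Jt_delta (X : 'I_n -> k) i :
  i \in J -> \sum_(l : Jt J) (val l == i)%:R * X (val l) = X i.
Proof.
move=> i_J; rewrite -(big_sub J (fun j => (j == i)%:R * X j)) (bigD1 i) //= eqxx mul1r.
by rewrite big1 ?addr0 // => j /andP [_ /negPf ->]; rewrite mul0r.
Qed.

Lemma coord_delta : rspan w coord -> rindep w J ->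
  forall i, i \in J -> forall l : Jt J, coord i l = (val l == i)%:R.
Proof.
move=> span indep i i_J l; apply/eqP; rewrite -subr_eq0; apply/eqP; move: l.
apply: indep => u; rewrite -[ncoef _ u]/(fcoef _ u) -[ncoef [::] u]/(fcoef _ u).
rewrite !fcoefE feval_nil feval_image.
under eq_bigr do rewrite feval_ncscale mulrBl.
rewrite big_split /= sumrN (sum_Jt_delta (fun j => feval _ (Defs.rel w j))) //.
rewrite (nceq_feval _ (span i)) feval_image; apply/eqP; rewrite subr_eq0; apply/eqP.
by apply: eq_bigr => l _; rewrite feval_ncscale.
Qed.

Lemma feval_f1 (g : word n * Jt J * word n -> k) i :
  feval g (f1 k J i) = if insub i is Some l then g ([::], l, [::]) else 0.
Proof. by rewrite /f1; case: insub => [l|]; rewrite ?feval_unit ?feval_nil. Qed.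

Lemma feval_f2d3 (g : word n * 'I_n * word n -> k) :
  feval g (ext (@f2 k n J) (d3 coord tt)) =
  \sum_(i : 'I_n) \sum_(l : Jt J) coord i l * (g ([:: i], val l, [::]) - g ([::], val l, [:: i])).
Proof.
rewrite feval_ext feval_image; apply: eq_bigr => i _; rewrite feval_image.
by apply: eq_bigr => l _; rewrite feval_tscale feval_comm !feval_unit.
Qed.

Lemma feval_d1s (g : word n * 'I_n * word n -> k) :
  feval g (@d1s k n tt) = \sum_(i : 'I_n) (g ([:: i], i, [::]) - g ([::], i, [:: i])).
Proof. by rewrite feval_image; apply: eq_bigr => i _; rewrite feval_comm. Qed.

Lemma feval_f0d1 (g : word n * unit * word n -> k) i :
  feval g (ext (@f0 k n) (@d1 k n i)) = g ([:: i], tt, [::]) - g ([::], tt, [:: i]).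
Proof. by rewrite feval_ext feval_comm !feval_unit. Qed.

Lemma feval_d3sf1 (g : word n * unit * word n -> k) i :
  feval g (ext (d3s coord) (f1 k J i)) =
  if insub i is Some l then feval g (d3s coord l) else 0.
Proof.
rewrite feval_ext feval_f1; case: insub => [l|] //=.
by apply: eq_feval => -[[x b] y]; rewrite cats0.
Qed.

(* By symmetry of second derivatives, the image of x_i^* under d_2^*, which is
   built from the derivatives d r_l / d x_i, pairs with g as the derivatives
   d r_i / d x_l. *)
Lemma feval_d2s (g : word n * Jt J * word n -> k) i :
  feval g (d2s w J i) =
  \sum_(l : Jt J) feval (fun x => g (x.1, l, x.2)) (pdiff (val l) (Defs.rel w i)).
Proof.
rewrite feval_image; apply: eq_bigr => l _.
rewrite feval_map -/(feval (fun x => g (x.2, l, x.1)) _).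
exact: (pdiff_rel_sym w i (val l) (fun u v => g (v, l, u))).
Qed.

(* The image of x_i^* under d_2^* is linear in r_i: it expands along the
   coordinates of r_i in the basis (r_l). *)
Lemma feval_d2s_coord (g : word n * Jt J * word n -> k) i :
  rspan w coord ->
  feval g (d2s w J i) = \sum_(l : Jt J) coord i l * feval g (d2s w J (val l)).
Proof.
move=> span; rewrite feval_d2s.
under eq_bigr do rewrite feval_pdiff (nceq_feval _ (span i)) feval_image.
rewrite exchange_big; apply: eq_bigr => l _; rewrite feval_d2s mulr_sumr.
by apply: eq_bigr => m _; rewrite feval_ncscale feval_pdiff.
Qed.

Lemma feval_f1d2 (g : word n * Jt J * word n -> k) (b : Jt J) :
  feval g (ext (@f1 k n J) (d2 w b)) =
  \sum_(l : Jt J) feval (fun x => g (x.1, l, x.2)) (pdiff (val l) (Defs.rel w (val b))).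
Proof.
rewrite feval_ext feval_image (bigID (mem J)) /= [X in _ + X]big1 ?addr0; last first.
  move=> i i_J; rewrite feval_map big1 // => a _.
  by rewrite feval_f1 insubN // mulr0.
rewrite (big_sub J (fun i => feval _ (map _ (pdiff i _)))); apply: eq_bigr => l _.
rewrite feval_map; apply: eq_bigr => a _; rewrite feval_f1 valK /=.
by rewrite cats0.
Qed.

Lemma f1d2_eq_d2sf2 (t : tns k n (Jt J)) :
  eqA w (ext (@f1 k n J) (ext (@d2 k n w J) t)) (ext (@d2s k n w J) (ext (@f2 k n J) t)).
Proof.
apply: eqA_feval => g; rewrite !feval_ext_ext; apply: eq_feval_ext => b g'.
by rewrite feval_f1d2 /f2 feval_ext_unit feval_d2s.
Qed.

Variable N : nat.
Hypotheses (w_homog : homog w N.+1) (N_ge2 : (2 <= N)%N).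

(* If J is everything, the coordinates are the identity and f_2 o d_3 = d_1^* o f_3. *)
Lemma f2d3_eq_d1sf3_full : rspan w coord -> rindep w J -> (forall i, i \in J) ->
  forall t : tns k n unit,
    eqA w (ext (@f2 k n J) (ext (@d3 k n J coord) t)) (ext (@d1s k n) (ext (@f3 k n) t)).
Proof.
move=> span indep J_full t; apply: eqA_feval => g; rewrite !feval_ext_ext.
apply: eq_feval_ext => -[] g'; rewrite feval_f2d3 /f3 feval_ext_unit feval_d1s.
apply: eq_bigr => i _; under eq_bigr do rewrite (coord_delta span indep) ?J_full //.
exact: (sum_Jt_delta (fun j => g' ([:: i], j, [::]) - g' ([::], j, [:: i]))).
Qed.

Lemma tcoef_f2_notin (t : tns k n (Jt J)) x j y :
  j \notin J -> tcoef (ext (@f2 k n J) t) (x, j, y) = 0.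
Proof.
move=> j_J; rewrite tcoefE feval_ext -(feval0 t).
apply: eq_feval => -[[u [l l_J]] v]; rewrite /f2 feval_unit /= !cats0.
have [l_j | /negPf l_j] := eqVneq l j; first by move: j_J; rewrite -l_j l_J.
by rewrite !xpair_eqE l_j andbF.
Qed.

Lemma tcoef_d1s_diag j :
  tcoef (ext (@d1s k n) (ext (@f3 k n) (unit_tensor _ tt))) ([:: j], j, [::]) = 1.
Proof.
rewrite tcoefE feval_ext_ext feval_ext_unit /f3 feval_ext_unit.
rewrite feval_d1s (bigD1 j) //= eqxx subr0 big1 ?addr0 // => i i_j.
by rewrite !xpair_eqE (negPf i_j) andbF /= subr0.
Qed.

Lemma f2d3_eq_d1sf3_iff : rspan w coord -> rindep w J ->
  (forall t : tns k n unit,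
     eqA w (ext (@f2 k n J) (ext (@d3 k n J coord) t)) (ext (@d1s k n) (ext (@f3 k n) t)))
    <-> #|J| = n.
Proof.
move=> span indep; split=> [comm | /in_full_set J_full]; last exact: f2d3_eq_d1sf3_full.
have [//|/eqP/exists_notin [j j_J]] := eqVneq #|J| n.
have := eqA_coef w_homog N_ge2 (x := [:: j]) (y := [::]) j (comm (unit_tensor _ tt)).
by rewrite tcoef_f2_notin // tcoef_d1s_diag => /(_ erefl erefl) /eqP; rewrite eq_sym oner_eq0.
Qed.

(* If J is everything, f_1 is the identification x_i |-> r_i^* and
   f_0 o d_1 = d_3^* o f_1. *)
Lemma f0d1_eq_d3sf1_full : (forall i, i \in J) ->
  forall t : tns k n 'I_n,
    eqA w (ext (@f0 k n) (ext (@d1 k n) t)) (ext (@d3s k n J coord) (ext (@f1 k n J) t)).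
Proof.
move=> J_full t; apply: eqA_feval => g; rewrite !feval_ext_ext; apply: eq_feval_ext => i g'.
rewrite feval_f0d1 feval_d3sf1; case: insubP => [l _ l_i|]; last by rewrite J_full.
rewrite feval_cat feval_comm l_i feval_flatten big_map big_filter big1 ?addr0 // => j.
by rewrite J_full.
Qed.

(* For j outside J, f_1 kills x_j while f_0 o d_1 does not. *)
Lemma tcoef_f0d1_diag j :
  tcoef (ext (@f0 k n) (ext (@d1 k n) (unit_tensor _ j))) ([:: j], tt, [::]) = 1.
Proof.
rewrite tcoefE feval_ext_ext feval_ext_unit feval_f0d1.
by rewrite !xpair_eqE !eqxx /= subr0.
Qed.

Lemma tcoef_d3sf1_notin j x y : j \notin J ->
  tcoef (ext (@d3s k n J coord) (ext (@f1 k n J) (unit_tensor _ j))) (x, tt, y) = 0.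
Proof.
move=> j_J; rewrite tcoefE feval_ext_ext feval_ext_unit.
by rewrite feval_d3sf1 insubN.
Qed.

Lemma f0d1_eq_d3sf1_iff :
  (forall t : tns k n 'I_n,
     eqA w (ext (@f0 k n) (ext (@d1 k n) t)) (ext (@d3s k n J coord) (ext (@f1 k n J) t)))
    <-> #|J| = n.
Proof.
split=> [comm | /in_full_set J_full]; last exact: f0d1_eq_d3sf1_full.
have [//|/eqP/exists_notin [j j_J]] := eqVneq #|J| n.
have := eqA_coef w_homog N_ge2 (x := [:: j]) (y := [::]) tt (comm (unit_tensor _ j)).
by rewrite tcoef_f0d1_diag tcoef_d3sf1_notin // => /(_ erefl erefl) /eqP; rewrite oner_eq0.
Qed.

(* For i0 outside J, the element x_i0^* - sum_l r_l^*(r_i0) x_l^* of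
   A (x) V^* (x) A: a d_2^*-cycle which is not a d_1^*-boundary. *)
Definition cycle_witness (i0 : 'I_n) : tns k n 'I_n :=
  unit_tensor _ i0 ++
  flatten [seq tscale (- coord i0 l) (unit_tensor _ (val l)) | l : Jt J].

Lemma feval_cycle_witness (g : word n * 'I_n * word n -> k) i0 :
  feval g (cycle_witness i0) =
  g ([::], i0, [::]) - \sum_(l : Jt J) coord i0 l * g ([::], val l, [::]).
Proof.
rewrite feval_cat feval_unit feval_image -sumrN; congr (_ + _); apply: eq_bigr => l _.
by rewrite feval_tscale feval_unit mulNr.
Qed.

Lemma cycle_witness_cycle i0 : rspan w coord -> zeroA w (ext (d2s w J) (cycle_witness i0)).
Proof.
move=> span; exists [::]; apply/teq_feval => g; rewrite feval_nil feval_ext.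
by rewrite feval_cycle_witness /= (feval_d2s_coord _ _ span) subrr.
Qed.

Lemma tcoef_d1s_unit (s : tns k n unit) i : tcoef (ext (@d1s k n) s) ([::], i, [::]) = 0.
Proof.
rewrite tcoefE feval_ext -(feval0 s).
apply: eq_feval => -[[x []] y]; rewrite feval_d1s big1 // => j _ /=.
rewrite !xpair_eqE.
have [-> ->] : (x ++ [:: j] == [::]) = false /\ (j :: y == [::]) = false by case: x.
by rewrite !andbF subrr.
Qed.

Lemma exact_d2s_full : rspan w coord ->
  (forall t : tns k n 'I_n, zeroA w (ext (@d2s k n w J) t) ->
     exists s : tns k n unit, eqA w t (ext (@d1s k n) s))
  -> #|J| = n.
Proof.
move=> span exact; have [//|/eqP/exists_notin [i0 i0_J]] := eqVneq #|J| n.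
have [s] := exact _ (cycle_witness_cycle i0 span).
move/(eqA_coef w_homog N_ge2 (x := [::]) (y := [::]) i0)=> /(_ erefl erefl).
rewrite tcoef_d1s_unit tcoefE feval_cycle_witness.
rewrite big1 => [|[l l_J] _ /=]; first by rewrite !eqxx subr0 => /eqP; rewrite oner_eq0.
have [l_i0 | /negPf l_i0] := eqVneq l i0; first by move: i0_J; rewrite -l_i0 l_J.
by rewrite !xpair_eqE l_i0 andbF /= mulr0.
Qed.

End Proposition2p4.

Theorem proposition2p4 (k : fieldType) (n N : nat) (w : nc k n)
    (J : {set 'I_n}) (coord : 'I_n -> Jt J -> k) :
  [pchar k] =i pred0 -> (0 < n)%N -> (2 <= N)%N ->
  homog w N.+1 -> ~ nceq w [::] ->
  @rspan k n w J coord -> rindep w J ->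
  [/\ (* (i) f_1 o d_2 = d_2^* o f_2 on A(x)R(x)A *)
      forall t : tns k n (Jt J),
        eqA w (ext (@f1 k n J) (ext (@d2 k n w J) t)) (ext (@d2s k n w J) (ext (@f2 k n J) t)),
      (* (ii) f_2 o d_3 = d_1^* o f_3 iff dim R = n *)
      (forall t : tns k n unit,
         eqA w (ext (@f2 k n J) (ext (@d3 k n J coord) t)) (ext (@d1s k n) (ext (@f3 k n) t)))
        <-> #|J| = n,
      (* f_0 o d_1 = d_3^* o f_1 iff dim R = n *)
      (forall t : tns k n 'I_n,
         eqA w (ext (@f0 k n) (ext (@d1 k n) t)) (ext (@d3s k n J coord) (ext (@f1 k n J) t)))
        <-> #|J| = n
    & (* (iii) exactness of C_w^vee at A(x)V^*(x)A implies dim R = n *)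
      (forall t : tns k n 'I_n, zeroA w (ext (@d2s k n w J) t) ->
         exists s : tns k n unit, eqA w t (ext (@d1s k n) s))
        -> #|J| = n].
Proof.
move=> _ _ N_ge2 w_homog _ span indep; split.
- exact: f1d2_eq_d2sf2.
- exact: f2d3_eq_d1sf3_iff w_homog N_ge2 span indep.
- exact: f0d1_eq_d3sf1_iff w_homog N_ge2.
- exact: exact_d2s_full w_homog N_ge2 span.
Qed.
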